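(* Let $m\ge 2$, $p$ a prime, and let $G=G_1\circ G_2\circ\dots\circ G_m$ be a finite group which is a central product of pairwise isomorphic extra-special subgroups $G_i$ of order $p^3$. Suppose $G$ admits an automorphism $\alpha$ of order $m$, with $m$ coprime to $p$, which cyclically permutes the factors $G_1,\dots,G_m$ and satisfies $G'\le C_G(\alpha)$. Then $[G,\alpha]$ is extra-special and has index $p^2$ in $G$.
   Context: A finite $p$-group $P$ is extra-special if $P'=Z(P)$ has order $p$. A group $G$ is a central product $H\circ K$ of subgroups $H,K$ if $G=\langle H,K\rangle$, $[H,K]=1$ and $H\cap K=Z(H)=Z(K)$; iterated central products are defined accordingly. $C_G(\alpha)$ is the fixed-point subgroup of $\alpha$, and $[G,\alpha]$ is the subgroup generated by all $g^{-1}g^{\alpha}$, $g\in G$. *)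

From HB Require Import structures.
From mathcomp Require Import all_boot all_fingroup all_solvable.
Set Implicit Arguments. Unset Strict Implicit. Unset Printing Implicit Defensive.
Local Open Scope group_scope.

Section Defs.
Variable gT : finGroupType.

Definition extraspecial_p (p : nat) (P : {set gT}) : bool :=
  [&& p.-group P, P^`(1) == 'Z(P) & #|'Z(P)| == p].

Definition central_prod_paper (H K G : {set gT}) : bool :=
  [&& G == H <*> K, K \subset 'C(H), H :&: K == 'Z(H) & 'Z(H) == 'Z(K)].

Definition prefix_gen (Gs : nat -> {group gT}) (k : nat) : {set gT} :=
  <<\bigcup_(i < k) Gs i>>.

Definition iter_central_prod (Gs : nat -> {group gT}) (m : nat) (G : {set gT}) : Prop :=
  (forall k, 0 < k < m -> central_prod_paper (prefix_gen Gs k) (Gs k) (prefix_gen Gs k.+1))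
  /\ G = prefix_gen Gs m.

Definition fixed_sub (G : {set gT}) (a : {perm gT}) : {set gT} :=
  [set x in G | a x == x].

Definition comm_aut (G : {set gT}) (a : {perm gT}) : {set gT} :=
  <<[set x^-1 * a x | x in G]>>.

End Defs.

From HB Require Import structures.
From mathcomp Require Import all_boot all_fingroup all_solvable.
Set Implicit Arguments. Unset Strict Implicit. Unset Printing Implicit Defensive.
Local Open Scope group_scope.

(* [G, a] is normal in G and, as a fixes G' <= Z(G), it centralises every
   a-fixed element of G.  For y in the factor K = G_0 the norm
   y y^a ... y^(a^(m-1)) is a-fixed and congruent to y^m modulo [G, a]; since m
   is coprime to |K|, this gives Z([G, a]) <= Z(G) and [G, a] /\ K <= Z(K).
   Moreover G = [G, a] K, and Z(G), of prime order p in the p-group G, lies in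
   the nontrivial normal subgroup [G, a].  Hence [G, a] /\ K = Z(K), so
   |G : [G, a]| = |K : Z(K)| = p^2, and [G, a] is not abelian (else G = K),
   so that [G, a]' = Z(G) = Z([G, a]). *)

Section GroupStructures.
Variable gT : finGroupType.

Lemma prefix_gen_group_set (Gs : nat -> {group gT}) k :
  group_set (prefix_gen Gs k).
Proof. exact: groupP. Qed.
Canonical prefix_gen_group Gs k := Group (prefix_gen_group_set Gs k).

Lemma comm_aut_group_set (G : {set gT}) a : group_set (comm_aut G a).
Proof. exact: groupP. Qed.
Canonical comm_aut_group G a := Group (comm_aut_group_set G a).

End GroupStructures.

Section IteratedCentralProduct.
Variables (gT : finGroupType) (Gs : nat -> {group gT}) (m : nat).

Lemma prefix_gen1 : prefix_gen Gs 1 = Gs 0.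
Proof. by rewrite /prefix_gen big_ord1 genGid. Qed.

Lemma sub_prefix_gen i k : i < k -> Gs i \subset prefix_gen Gs k.
Proof. by move=> lt_ik; rewrite sub_gen // (bigcup_sup (Ordinal lt_ik)). Qed.

Hypothesis cpGs : forall k, 0 < k < m ->
  central_prod_paper (prefix_gen Gs k) (Gs k) (prefix_gen Gs k.+1).

Lemma prefix_gen_cprod k :
  k.+1 < m -> prefix_gen Gs k.+1 \* Gs k.+1 = prefix_gen Gs k.+2.
Proof. by case/(@cpGs k.+1)/and4P=> /eqP-> cGk _ _; rewrite cprodEY. Qed.

Lemma center_factor_prefix k : k.+1 < m -> 'Z(Gs k.+1) = 'Z(prefix_gen Gs k.+1).
Proof. by case/(@cpGs k.+1)/and4P=> _ _ _ /eqP. Qed.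

Lemma center_prefix_gen k : 0 < k <= m -> 'Z(prefix_gen Gs k) = 'Z(Gs 0).
Proof.
elim: k => [|[|k] IHk] // /andP[_ lt_km]; first by rewrite prefix_gen1.
have [_ <- _] := cprodP (center_cprod (prefix_gen_cprod lt_km)).
by rewrite (center_factor_prefix lt_km) IHk ?mulGid // (ltnW lt_km).
Qed.

Lemma center_factor i : i < m -> 'Z(Gs i) = 'Z(Gs 0).
Proof.
case: i => [|i] // lt_im.
by rewrite (center_factor_prefix lt_im) center_prefix_gen ?(ltnW lt_im).
Qed.

Lemma cent_factors i j : i < j -> j < m -> Gs j \subset 'C(Gs i).
Proof.
move=> lt_ij lt_jm; have /cpGs/and4P[_ cPj _ _] : 0 < j < m.
  by rewrite lt_jm (leq_ltn_trans _ lt_ij).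
exact: subset_trans cPj (centS (sub_prefix_gen lt_ij)).
Qed.

Lemma pgroup_prefix_gen p k : (forall i, i < m -> p.-group (Gs i)) ->
  0 < k <= m -> p.-group (prefix_gen Gs k).
Proof.
move=> pGs; elim: k => [|[|k] IHk] // /andP[_ lt_km].
  by rewrite prefix_gen1 pGs.
have [_ <- _] := cprodP (prefix_gen_cprod lt_km).
by rewrite pgroupM IHk ?pGs // (ltnW lt_km).
Qed.

Lemma der1_prefix_gen k : (forall i, i < m -> (Gs i)^`(1) \subset 'Z(Gs i)) ->
  0 < k <= m -> (prefix_gen Gs k)^`(1) \subset 'Z(Gs 0).
Proof.
move=> Gs'Z; elim: k => [|[|k] IHk] // /andP[_ lt_km].
  by rewrite prefix_gen1 Gs'Z.
have [_ <- _] := cprodP (der_cprod 1 (prefix_gen_cprod lt_km)).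
rewrite mul_subG ?IHk ?(ltnW lt_km) //.
by have := Gs'Z _ lt_km; rewrite (center_factor lt_km).
Qed.

Lemma prefix_gen_not_sub_factor0 k :
  (1 < k <= m)%N -> ~~ abelian (Gs 1%N) -> ~~ (prefix_gen Gs k \subset Gs 0).
Proof.
case/andP=> lt1k le_km; apply: contra => sPG0.
have lt1m : (1 < m)%N := leq_trans lt1k le_km.
apply: abelianS (center_abelian (Gs 1%N)); rewrite (center_factor lt1m) subsetI.
by rewrite (subset_trans (sub_prefix_gen lt1k)) ?cent_factors.
Qed.

End IteratedCentralProduct.

Section CommAut.
Variables (gT : finGroupType) (G : {group gT}) (a : {perm gT}).
Hypothesis AutGa : a \in Aut G.
Local Notation H := (comm_aut G a).

Lemma aut_morphM : {in G &, {morph a : x y / x * y}}.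
Proof. by move=> x y Gx Gy; rewrite -(autmE AutGa) morphM. Qed.

Lemma iter_Aut_closed k x : x \in G -> iter k a x \in G.
Proof. by move=> Gx; elim: k => //= k IHk; rewrite Aut_closed. Qed.

Lemma mem_comm_aut x : x \in G -> x^-1 * a x \in H.
Proof. by move=> Gx; rewrite mem_gen //; apply/imsetP; exists x. Qed.

Lemma comm_aut_sub : H \subset G.
Proof.
rewrite gen_subG; apply/subsetP=> _ /imsetP[x Gx ->].
by rewrite groupM ?groupV ?Aut_closed.
Qed.

Lemma comm_aut_norm : G \subset 'N(H).
Proof.
apply/subsetP=> h Gh; rewrite inE -genJ gen_subG.
apply/subsetP=> _ /imsetP[_ /imsetP[x Gx ->] ->].
have -> : (x^-1 * a x) ^ h = (x * h)^-1 * a (x * h) * (h^-1 * a h)^-1.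
  by rewrite aut_morphM // conjgE !invMg !invgK !mulgA mulgK.
by rewrite groupM ?groupV ?mem_comm_aut ?groupM.
Qed.

Lemma comm_aut_normal : H <| G.
Proof. by rewrite /normal comm_aut_sub comm_aut_norm. Qed.

Lemma comm_aut_eq1 : H = 1 -> a = 1.
Proof.
move=> H1; apply/permP=> x; rewrite perm1.
have [Gx | notGx] := boolP (x \in G); last exact: out_Aut AutGa notGx.
have := mem_comm_aut Gx; rewrite H1 inE -{2}(mulKVg x (a x)) => /eqP->.
by rewrite mulg1.
Qed.

Lemma comm_aut_stable (L : {group gT}) x :
  H \subset L -> L \subset G -> x \in L -> a x \in L.
Proof.
move=> sHL sLG Lx; rewrite -(mulKVg x (a x)) groupM //.
by rewrite (subsetP sHL) // mem_comm_aut // (subsetP sLG).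
Qed.

Definition aut_norm k y := \prod_(i < k) iter i a y.

Lemma aut_norm_closed k y : y \in G -> aut_norm k y \in G.
Proof. by move=> Gy; apply: group_prod => i _; rewrite iter_Aut_closed. Qed.

Lemma aut_normE k y : aut_norm k.+1 y = y * \prod_(i < k) iter i.+1 a y.
Proof. by rewrite /aut_norm big_ord_recl. Qed.

Lemma aut_aut_norm k y :
  y \in G -> a (aut_norm k y) = \prod_(i < k) iter i.+1 a y.
Proof.
move=> Gy; rewrite /aut_norm; elim: k => [|k IHk].
  by rewrite !big_ord0 -(autmE AutGa) morph1.
by rewrite !big_ord_recr /= aut_morphM ?iter_Aut_closed ?aut_norm_closed // IHk.
Qed.

Lemma aut_norm_fixed k y : a ^+ k.+1 = 1 -> y \in G ->
    commute y (\prod_(i < k) iter i.+1 a y) ->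
  a (aut_norm k.+1 y) = aut_norm k.+1 y.
Proof.
move=> ak1 Gy cy; have iter_y : iter k.+1 a y = y by rewrite -permX ak1 perm1.
by rewrite aut_aut_norm // big_ord_recr /= -iterS iter_y aut_normE cy.
Qed.

Lemma mem_comm_aut_iter k y : y \in G -> y^-1 * iter k a y \in H.
Proof.
move=> Gy; elim: k => [|k IHk]; first by rewrite mulVg group1.
rewrite -(mulKVg (iter k a y) (iter k.+1 a y)) mulgA groupM //.
by rewrite iterS mem_comm_aut ?iter_Aut_closed.
Qed.

Lemma mem_comm_aut_norm k y : y \in G -> (y ^+ k)^-1 * aut_norm k y \in H.
Proof.
move=> Gy; elim: k => [|k IHk].
  by rewrite /aut_norm big_ord0 expg0 mulg1 invg1 group1.
rewrite /aut_norm big_ord_recr /= expgSr invMg.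
have -> : y^-1 * (y ^+ k)^-1 * (aut_norm k y * iter k a y)
    = ((y ^+ k)^-1 * aut_norm k y) ^ y * (y^-1 * iter k a y).
  by rewrite conjgE !mulgA mulgK.
have nHy := subsetP comm_aut_norm y Gy.
by rewrite groupM ?mem_comm_aut_iter ?(memJ_norm _ nHy).
Qed.

End CommAut.

Lemma prime_center_sub_normal (gT : finGroupType) (G H : {group gT}) :
  nilpotent G -> prime #|'Z(G)| -> H <| G -> H :!=: 1 -> 'Z(G) \subset H.
Proof.
move=> nilG prZ nsHG ntH; have := meet_center_nil nilG nsHG ntH.
by apply: contraR => notZH; rewrite setIC prime_TIg.
Qed.

Section ClassTwoCommAut.
Variables (gT : finGroupType) (G : {group gT}) (a : {perm gT}).
Hypotheses (AutGa : a \in Aut G) (G'Z : G^`(1) \subset 'Z(G))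
  (fixG' : G^`(1) \subset fixed_sub G a).
Local Notation H := (comm_aut G a).

Lemma comm_aut_cent_fixed c : c \in G -> a c = c -> H \subset 'C[c].
Proof.
move=> Gc ac; rewrite gen_subG.
apply/subsetP=> _ /imsetP[g Gg ->]; apply/cent1P.
set z := [~ g, c].
have G'z : z \in G^`(1) by rewrite derg1 mem_commg.
have az : [~ a g, c] = z.
  have /setIdP[_ /eqP az] := subsetP fixG' z G'z.
  by rewrite -{1}ac -(autmE AutGa) -morphR //= autmE.
have cz : commute (g^-1 * a g) z.
  have /setIP[_ /centP cGz] := subsetP G'Z z G'z.
  by apply/commute_sym/cGz; rewrite groupM ?groupV ?Aut_closed.
apply/commgP/conjg_fixP; rewrite conjMg conjVg !conjg_mulR az invMg -/z.
by rewrite -!mulgA (mulgA g^-1) cz mulKg.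
Qed.

Variables (K : {group gT}) (n : nat).
Hypotheses (defG : H * K = G) (an : a ^+ n.+1 = 1) (coKn : coprime #|K| n.+1)
  (cK_iter : forall y i, y \in K -> i < n -> iter i.+1 a y \in 'C(K)).

Let sKG : K \subset G. Proof. by rewrite -defG mulG_subr. Qed.

Lemma cent_aut_norm_tail y : y \in K -> \prod_(i < n) iter i.+1 a y \in 'C(K).
Proof. by move=> Ky; apply: group_prod => i _; rewrite cK_iter. Qed.

Lemma aut_norm_fixed_factor y :
  y \in K -> a (aut_norm a n.+1 y) = aut_norm a n.+1 y.
Proof.
move=> Ky; apply: (aut_norm_fixed AutGa an); first exact: (subsetP sKG).
by apply: commute_sym; apply: (centP (cent_aut_norm_tail Ky)).
Qed.

Lemma comm_aut_cent_aut_norm y : y \in K -> H \subset 'C[aut_norm a n.+1 y].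
Proof.
move=> Ky; apply: comm_aut_cent_fixed (aut_norm_fixed_factor Ky).
exact/aut_norm_closed/(subsetP sKG).
Qed.

Lemma center_comm_aut_sub : 'Z(H) \subset 'Z(G).
Proof.
apply/subsetP=> x /setIP[Hx /centP cHx].
have cKx : x \in 'C(K).
  apply/centP=> y Ky; have cHN := comm_aut_cent_aut_norm Ky.
  set N := aut_norm a n.+1 y in cHN *.
  have cxN : commute x N by apply/cent1P; rewrite (subsetP cHN).
  have cxyn : commute x (y ^+ n.+1).
    have -> : y ^+ n.+1 = N * ((y ^+ n.+1)^-1 * N)^-1.
      by rewrite invMg invgK mulKVg.
    by apply: commuteM => //; apply/commuteV/cHx/mem_comm_aut_norm/(subsetP sKG).
  by rewrite -(expgK coKn Ky); apply: commuteX.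
have defHK := norm_joinEr (subset_trans sKG (comm_aut_norm AutGa)).
rewrite inE (subsetP (comm_aut_sub AutGa)) // -defG -defHK centY !inE cKx andbT.
exact/centP.
Qed.

Lemma comm_aut_meet_sub : H :&: K \subset 'Z(K).
Proof.
apply/subsetP=> x /setIP[Hx Kx]; rewrite inE Kx; apply/centP=> y Ky.
have /centP cKe := cent_aut_norm_tail Ky.
have /cent1P := subsetP (comm_aut_cent_aut_norm Ky) x Hx.
rewrite aut_normE; set e := \prod_(i < n) _ => cxye.
by apply: (mulIg e); rewrite -mulgA cxye -mulgA (cKe x Kx) mulgA.
Qed.

Variable p : nat.
Hypotheses (pG : p.-group G) (pr_p : prime p) (oZ : #|'Z(G)| = p)
  (ZGK : 'Z(G) = 'Z(K)) (a_neq1 : a != 1) (notGK : ~~ (G \subset K)).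

Lemma center_sub_comm_aut : 'Z(G) \subset H.
Proof.
apply: prime_center_sub_normal; rewrite ?oZ ?comm_aut_normal ?(pgroup_nil pG) //.
by apply: contra_neq a_neq1; apply: comm_aut_eq1.
Qed.

Lemma comm_aut_meet : H :&: K = 'Z(K).
Proof.
apply/eqP; rewrite eqEsubset comm_aut_meet_sub subsetI center_sub andbT.
by rewrite -ZGK center_sub_comm_aut.
Qed.

Lemma index_comm_aut : #|G : H| = #|K : 'Z(K)|.
Proof. by rewrite -{1}defG indexMg -indexgI setIC comm_aut_meet. Qed.

Lemma center_comm_aut : 'Z(H) = 'Z(G).
Proof.
apply/eqP; rewrite eqEsubset center_comm_aut_sub subsetI center_sub_comm_aut.
exact: subset_trans (subsetIr _ _) (centS (comm_aut_sub AutGa)).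
Qed.

Lemma der1_comm_aut : H^`(1) = 'Z(G).
Proof.
have sH'Z : H^`(1) \subset 'Z(G).
  exact: subset_trans (dergS 1 (comm_aut_sub AutGa)) G'Z.
apply/eqP; rewrite eqEsubset sH'Z /=; apply: contraR notGK => notZH'.
have /center_idP sHK : abelian H.
  by apply/derG1P; rewrite -(setIidPr sH'Z) prime_TIg ?oZ.
by rewrite -{1}defG mul_subG // -sHK center_comm_aut ZGK center_sub.
Qed.

Lemma extraspecial_comm_aut : extraspecial_p p H /\ #|G : H| = #|K : 'Z(K)|.
Proof.
rewrite /extraspecial_p (pgroupS (comm_aut_sub AutGa) pG) der1_comm_aut.
by rewrite center_comm_aut oZ !eqxx index_comm_aut.
Qed.

End ClassTwoCommAut.

Section CyclicallyPermutedFactors.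
Variables (gT : finGroupType) (Gs : nat -> {group gT}) (m : nat) (a : {perm gT}).
Hypothesis aGs : forall i, i < m -> a @: Gs i = Gs (i.+1 %% m).

Lemma aut_factor_succ i : i.+1 < m -> a @: Gs i = Gs i.+1.
Proof. by move=> lt_i1m; rewrite aGs ?modn_small // ltnW. Qed.

Lemma iter_factor0 i y : i < m -> y \in Gs 0 -> iter i a y \in Gs i.
Proof.
move=> + G0y; elim: i => // i IHi lt_i1m.
by rewrite -(aut_factor_succ lt_i1m) iterS imset_f ?IHi // ltnW.
Qed.

Lemma factors_sub_stable (L : {group gT}) :
    {in L, forall x, a x \in L} -> Gs 0 \subset L ->
  forall i, i < m -> Gs i \subset L.
Proof.
move=> aL sG0L; elim=> [// | i IHi lt_i1m].
rewrite -(aut_factor_succ lt_i1m); apply/subsetP=> _ /imsetP[x Gix ->].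
by rewrite aL // (subsetP (IHi (ltnW lt_i1m))).
Qed.

Lemma comm_aut_mul_factor0 (G : {group gT}) :
    a \in Aut G -> G = prefix_gen Gs m :> {set gT} -> 0 < m ->
  comm_aut G a * Gs 0 = G.
Proof.
move=> AutGa defG m_gt0.
have sG0G : Gs 0 \subset G by rewrite defG sub_prefix_gen.
have defHG0 := norm_joinEr (subset_trans sG0G (comm_aut_norm AutGa)).
apply/eqP; rewrite eqEsubset mul_subG ?comm_aut_sub //= -defHG0.
rewrite {1}defG gen_subG; apply/bigcupsP=> [[i lt_im]] _ /=.
apply: factors_sub_stable; rewrite ?joing_subr //.
move=> x; apply: (@comm_aut_stable _ G); rewrite ?joing_subl //=.
by rewrite join_subG comm_aut_sub.
Qed.

End CyclicallyPermutedFactors.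

Theorem lemma2p5 (gT : finGroupType) (m p : nat) (G : {group gT})
    (Gs : nat -> {group gT}) (a : {perm gT}) :
  2 <= m -> prime p ->
  (forall i, i < m -> extraspecial_p p (Gs i) /\ #|Gs i| = (p ^ 3)%N) ->
  (forall i j, i < m -> j < m -> Gs i \isog Gs j) ->
  iter_central_prod Gs m G ->
  a \in Aut G -> #[a] = m -> coprime m p ->
  (forall i, i < m -> a @: Gs i = Gs (i.+1 %% m)) ->
  G^`(1) \subset fixed_sub G a ->
  extraspecial_p p (comm_aut G a) /\ #|G : comm_aut G a| = (p ^ 2)%N.
Proof.
(* The factors need not be isomorphic for this argument. *)
move=> m_ge2 pr_p esGs _ [cpGs defG] AutGa oa cop_mp aGs fixG'.
have m_gt0 : 0 < m := ltnW m_ge2.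
have le_mm : 0 < m <= m by rewrite m_gt0 leqnn.
have pGs i : i < m -> p.-group (Gs i) by case/esGs=> /and3P[].
have Gs'Z i : i < m -> (Gs i)^`(1) \subset 'Z(Gs i).
  by case/esGs=> /and3P[_ /eqP->].
have [/and3P[_ _ /eqP oZ0] oG0] := esGs 0 m_gt0.
have [/and3P[_ /eqP G1'Z /eqP oZ1] _] := esGs 1%N m_ge2.
have ZG : 'Z(G) = 'Z(Gs 0) by rewrite defG (center_prefix_gen cpGs le_mm).
have G'Z : G^`(1) \subset 'Z(G).
  by rewrite ZG defG (der1_prefix_gen cpGs Gs'Z le_mm).
have pG : p.-group G by rewrite defG (pgroup_prefix_gen cpGs pGs le_mm).
have [n def_m] : exists n, m = n.+1 by exists m.-1; rewrite prednK.
have an : a ^+ n.+1 = 1 by rewrite -def_m -oa expg_order.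
have coG0n : coprime #|Gs 0| n.+1.
  by rewrite -def_m oG0 coprimeXl // coprime_sym.
have cG0_iter y i : y \in Gs 0 -> i < n -> iter i.+1 a y \in 'C(Gs 0).
  move=> G0y lt_in; have lt_i1m : i.+1 < m by rewrite def_m.
  have cG0Gi1 := cent_factors cpGs (ltn0Sn i) lt_i1m.
  exact: subsetP cG0Gi1 _ (iter_factor0 aGs lt_i1m G0y).
have a_neq1 : a != 1 by rewrite -order_eq1 oa gtn_eqF.
have notGG0 : ~~ (G \subset Gs 0).
  rewrite defG (prefix_gen_not_sub_factor0 cpGs) ?m_ge2 ?leqnn //.
  by rewrite (sameP derG1P eqP) G1'Z trivg_card1 oZ1 gtn_eqF ?prime_gt1.
have oZ : #|'Z(G)| = p by rewrite ZG.
have [esH ->] := extraspecial_comm_aut AutGa G'Z fixG'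
  (comm_aut_mul_factor0 aGs AutGa defG m_gt0) an coG0n cG0_iter pG pr_p
  oZ ZG a_neq1 notGG0.
by rewrite -divgS ?center_sub // oG0 oZ0 expnSr mulnK ?prime_gt0.
Qed.
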